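(* Let $d\ge 2$ and let $\rho_{DS}=\sum_{\mathbf{k}} p_{\mathbf{k}}\,|D_{\mathbf{k}}\rangle\langle D_{\mathbf{k}}|$ be a diagonal symmetric state on $(\mathbb{C}^d)^{\otimes 3}$. Let $M^{(3)}(\rho_{DS})=\bigoplus_{i=0}^{d-1}M^{(3)}_i(\rho_{DS})$, where $M^{(3)}_i(\rho_{DS})$ is the $d\times d$ matrix with entries $\big(M^{(3)}_i\big)_{ab}=\bar p_{iab}$, $a,b\in\{0,\dots,d-1\}$. Then $\rho_{DS}$ is PPT if and only if $M^{(3)}(\rho_{DS})\in\mathcal{DNN}_{d^2}$.
   Context: For $N$ parties and local dimension $d$, $\mathbf{k}=(k_0,\dots,k_{d-1})$, $k_i\ge0$, $\sum_ik_i=N$, and the Dicke state is $|D_{\mathbf k}\rangle=\binom{N}{\mathbf k}^{-1/2}\sum_{\pi}\pi\big(|0\rangle^{\otimes k_0}\otimes\cdots\otimes|d-1\rangle^{\otimes k_{d-1}}\big)$, summing over all distinct permutations of tensor factors, with $\binom{N}{\mathbf k}=\frac{N!}{k_0!\cdots k_{d-1}!}$. A diagonal symmetric state is $\sum_{\mathbf k}p_{\mathbf k}|D_{\mathbf k}\rangle\langle D_{\mathbf k}|$ with $p_{\mathbf k}\ge0$, $\sum p_{\mathbf k}=1$. Here $N=3$; $p_{ijk}$ denotes the coefficient of the Dicke state with index multiset $\{i,j,k\}$, and $\bar p_{ijk}=p_{ijk}/N_{ijk}$ with $N_{ijk}=1$ if $i=j=k$, $3$ if exactly two indices coincide, $6$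 if all are distinct. The state is PPT if its partial transpose with respect to a single party (by permutation symmetry, any party) is positive semidefinite. $\mathcal{DNN}_n$ is the cone of $n\times n$ doubly non-negative matrices: positive semidefinite with all entries non-negative. *)

From HB Require Import structures.
From mathcomp Require Import all_boot all_order all_algebra.
From mathcomp Require Import algC.
Set Implicit Arguments. Unset Strict Implicit. Unset Printing Implicit Defensive.
Import Order.TTheory GRing.Theory Num.Theory.
Local Open Scope ring_scope.

(* Computational basis of (C^d)^{ox 3}: triples of local indices. *)
Definition basis3 (d : nat) : finType := ('I_d * 'I_d * 'I_d)%type.

(* Dicke indices: occupation numbers k : 'I_d -> {0..3}; valid iff sum = 3. *)
Definition dicke_idx (d : nat) : finType := {ffun 'I_d -> 'I_4}.
Definition valid_idx d (k : dicke_idx d) : bool := (\sum_i (k i : nat) == 3)%N.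

Definition occ d (x : basis3 d) (i : 'I_d) : nat :=
  ((x.1.1 == i) + (x.1.2 == i) + (x.2 == i))%N.

Definition mset3 d (i a b : 'I_d) : dicke_idx d :=
  [ffun j => inord ((i == j) + (a == j) + (b == j))%N].

Definition multinom d (k : dicke_idx d) : algC :=
  (3`!)%:R / \prod_i ((k i : nat)`!)%:R.

(* Dicke vector |D_k>: normalized sum of all distinct permutations of
   |0>^{k_0} ... |d-1>^{k_{d-1}}, i.e. of all basis strings with
   occupation numbers k, each appearing exactly once. *)
Definition dicke d (k : dicke_idx d) (x : basis3 d) : algC :=
  if [forall i, occ x i == (k i : nat)] then (sqrtC (multinom k))^-1 else 0.

Definition fmat (T : finType) := T -> T -> algC.

Definition rhoDS d (p : dicke_idx d -> algC) : fmat (basis3 d) :=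
  fun x y => \sum_(k | valid_idx k) p k * dicke k x * (dicke k y)^*.

Definition ptrans1 d (A : fmat (basis3 d)) : fmat (basis3 d) :=
  fun x y => A (y.1.1, x.1.2, x.2) (x.1.1, y.1.2, y.2).

Definition psd (T : finType) (A : fmat T) : Prop :=
  forall v : T -> algC, 0 <= \sum_i \sum_j (v i)^* * A i j * v j.

Definition PPT d (p : dicke_idx d -> algC) : Prop := psd (ptrans1 (rhoDS p)).

Definition DNN (T : finType) (A : fmat T) : Prop :=
  psd A /\ forall i j, 0 <= A i j.

Definition Ncount d (i j k : 'I_d) : algC :=
  if (i == j) && (j == k) then 1
  else if (i != j) && (j != k) && (i != k) then 6 else 3.

Definition pbar d (p : dicke_idx d -> algC) (i j k : 'I_d) : algC :=
  p (mset3 i j k) / Ncount i j k.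

(* M^(3) = (+)_i M_i, indexed by pairs (block i, row a), (M_i)_{ab} = pbar i a b *)
Definition M3 d (p : dicke_idx d -> algC) : fmat ('I_d * 'I_d)%type :=
  fun x y => if x.1 == y.1 then pbar p x.1 x.2 y.2 else 0.

From mathcomp Require Import all_boot all_order all_algebra.
From mathcomp Require Import algC zify.
Set Implicit Arguments. Unset Strict Implicit. Unset Printing Implicit Defensive.
Import Order.TTheory GRing.Theory Num.Theory.
Local Open Scope ring_scope.

(* The partial transpose of rho_DS has entry rho_{(a',b,c),(a,b',c')}, which is
   nonzero only if the multisets {a',b,c} and {a,b',c'} coincide.  If a occurs
   in {b,c}, write {b,c} = {a,o}: the entry against a string (a',b',c') with
   {b',c'} = {a',o'} is nonzero iff o = o', and then equals pbar_{o a a'}, an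
   entry of the block M_o of M^(3).  If a does not occur in {b,c}, the entry is
   nonzero only for a = a' and {b,c} = {b',c'}, with value p_k / binom(3,k) >= 0.
   So the partial transpose is the pullback of M^(3) (+) (nonnegative diagonal)
   along a map of basis strings; pullbacks preserve positivity, and every vector
   on the blocks of M^(3) is pushed forward from one supported on strings (a,a,o).
   Non-negativity of M^(3) is just p >= 0. *)

Definition qform (T : finType) (A : fmat T) (v : T -> algC) : algC :=
  \sum_i \sum_j (v i)^* * A i j * v j.

Lemma eq_qform (T : finType) (A B : fmat T) (v w : T -> algC) :
  A =2 B -> v =1 w -> qform A v = qform B w.
Proof.
by move=> eqAB eqvw; apply: eq_bigr => i _; apply: eq_bigr => j _; rewrite eqAB !eqvw.
Qed.

Lemma eq_psd (T : finType) (A B : fmat T) : A =2 B -> psd A <-> psd B.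
Proof.
move=> eqAB; have eqv := eq_qform eqAB (frefl _).
by split=> psdA v; move: (psdA v); rewrite -/(qform _ v) -/(qform _ v) eqv.
Qed.

Lemma qformv0 (T : finType) (A : fmat T) : qform A (fun=> 0) = 0.
Proof. by apply: big1 => i _; apply: big1 => j _; rewrite mulr0. Qed.

Definition fpull (T U : finType) (f : T -> U) (M : fmat U) : fmat T :=
  fun x y => M (f x) (f y).

Definition fpush (T U : finType) (f : T -> U) (w : T -> algC) : U -> algC :=
  fun u => \sum_(x | f x == u) w x.

Lemma qform_pull (T U : finType) (f : T -> U) (M : fmat U) (w : T -> algC) :
  qform (fpull f M) w = qform M (fpush f w).
Proof.
have sum_fibres (F : T -> algC) : \sum_x F x = \sum_u \sum_(x | f x == u) F x.
  exact: partition_big.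
rewrite /qform sum_fibres; apply: eq_bigr => u _.
under [RHS]eq_bigr => u' _ do rewrite /fpush rmorph_sum -mulrA big_distrl /=.
rewrite [RHS]exchange_big; apply: eq_bigr => x /eqP fx.
rewrite sum_fibres; apply: eq_bigr => u' _.
rewrite !mulr_sumr; apply: eq_bigr => y /eqP fy.
by rewrite /fpull fx fy mulrA.
Qed.

Lemma psd_pull (T U : finType) (f : T -> U) (M : fmat U) : psd M -> psd (fpull f M).
Proof.
by move=> psdM w; change (0 <= qform (fpull f M) w); rewrite qform_pull; apply: psdM.
Qed.

Definition fblockdiag (T U : finType) (A : fmat T) (B : fmat U) : fmat (T + U)%type :=
  fun s t => match s, t with
             | inl i, inl j => A i j
             | inr i, inr j => B i j
             | _, _ => 0
             end.

Lemma qform_blockdiag (T U : finType) (A : fmat T) (B : fmat U) (v : T + U -> algC) :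
  qform (fblockdiag A B) v = qform A (fun i => v (inl i)) + qform B (fun j => v (inr j)).
Proof.
rewrite /qform big_sumType; congr (_ + _); apply: eq_bigr => i _; rewrite big_sumType /=.
- by rewrite [X in _ + X]big1 ?addr0 // => j _; rewrite mulr0 mul0r.
- by rewrite big1 ?add0r // => j _; rewrite mulr0 mul0r.
Qed.

Lemma psd_blockdiag (T U : finType) (A : fmat T) (B : fmat U) :
  psd A -> psd B -> psd (fblockdiag A B).
Proof.
move=> psdA psdB v; change (0 <= qform (fblockdiag A B) v).
by rewrite qform_blockdiag addr_ge0 //; [apply: psdA | apply: psdB].
Qed.

Definition fdiag (T : finType) (g : T -> algC) : fmat T :=
  fun i j => if i == j then g i else 0.

Lemma psd_diag (T : finType) (g : T -> algC) : (forall i, 0 <= g i) -> psd (fdiag g).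
Proof.
move=> g_ge0 v; apply: sumr_ge0 => i _; rewrite (bigD1 i) //= big1 => [|j ji].
  by rewrite /fdiag eqxx addr0 mulrAC mulr_ge0 // mulrC mul_conjC_ge0.
by rewrite /fdiag eq_sym (negPf ji) mulr0 mul0r.
Qed.

Section ThreeParties.

Variable d : nat.
Implicit Types (a b c e i j : 'I_d) (k : dicke_idx d) (x y : basis3 d).
Implicit Types (p : dicke_idx d -> algC).

Lemma mset3E a b c j :
  (mset3 a b c j : nat) = ((a == j) + (b == j) + (c == j))%N.
Proof. by rewrite ffunE inordK // ltnS; case: (a == j); case: (b == j); case: (c == j). Qed.

Lemma mset3P a b c a' b' c' :
  reflect (forall j, (a == j) + (b == j) + (c == j) = (a' == j) + (b' == j) + (c' == j))%N
          (mset3 a b c == mset3 a' b' c').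
Proof.
apply: (iffP eqP) => [E j | E]; first by rewrite -!mset3E E.
by apply/ffunP => j; apply: val_inj; rewrite /= !mset3E.
Qed.

Lemma valid_idx_mset3 a b c : valid_idx (mset3 a b c).
Proof.
have sum_eq1 e : (\sum_j (e == j) = 1)%N.
  by rewrite (bigD1 e) //= eqxx big1 // => j; rewrite eq_sym => /negPf->.
rewrite /valid_idx (eq_bigr _ (fun j _ => mset3E a b c j)).
by rewrite !big_split /= !sum_eq1.
Qed.

Lemma prod_fact_addS (F : 'I_d -> nat) c :
  (\prod_j (F j + (c == j))`! = (F c).+1 * \prod_j (F j)`!)%N.
Proof.
rewrite (bigD1 c) //= [in RHS](bigD1 c) //= eqxx addn1 factS mulnA; congr (_ * _)%N.
by apply: eq_bigr => j; rewrite eq_sym => /negPf->; rewrite addn0.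
Qed.

Lemma prod_fact_mset3 a b c :
  (\prod_j (mset3 a b c j)`! = ((a == c) + (b == c)).+1 * (a == b).+1)%N.
Proof.
under eq_bigr do rewrite mset3E -[(a == _ : nat)]add0n.
by rewrite !prod_fact_addS big1 ?muln1.
Qed.

Lemma multinom_mset3 a b c : multinom (mset3 a b c) = Ncount a b c.
Proof.
have fact3_div (m n : nat) : (3`! = m * n)%N -> (3`!)%:R / n%:R = m%:R :> algC.
  by move=> E; rewrite E natrM mulfK // pnatr_eq0; case: n E => [|n]; rewrite ?muln0.
rewrite /multinom -natr_prod prod_fact_mset3 /Ncount.
have [<-|ab] := eqVneq a b.
  by case: eqP => _; [apply: (fact3_div 1) | apply: (fact3_div 3)].
have [<-|ac] := eqVneq a c; first by rewrite eq_sym (negPf ab); apply: (fact3_div 3).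
by case: eqVneq => _; [apply: (fact3_div 3) | apply: (fact3_div 6)].
Qed.

Lemma multinom_ge0 k : 0 <= multinom k.
Proof. by rewrite divr_ge0 ?prodr_ge0. Qed.

Definition type3 x : dicke_idx d := mset3 x.1.1 x.1.2 x.2.

Definition pbar_idx p k : algC := p k / multinom k.

Lemma pbarE p a b c : pbar p a b c = pbar_idx p (mset3 a b c).
Proof. by rewrite /pbar_idx multinom_mset3. Qed.

Lemma pbar_idx_ge0 p k : (forall k, 0 <= p k) -> 0 <= pbar_idx p k.
Proof. by move=> p_ge0; rewrite divr_ge0 ?multinom_ge0. Qed.

Lemma dickeE k x :
  dicke k x = if k == type3 x then (sqrtC (multinom k))^-1 else 0.
Proof.
rewrite /dicke; congr (if _ then _ else _); apply/forallP/eqP => [occ_k|-> i].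
  by apply/ffunP => j; apply: val_inj; rewrite /= mset3E -(eqP (occ_k j)).
by rewrite mset3E.
Qed.

Lemma rhoDSE p x y :
  rhoDS p x y = if type3 x == type3 y then pbar_idx p (type3 x) else 0.
Proof.
rewrite /rhoDS (bigD1 (type3 x)) ?valid_idx_mset3 //= big1 ?addr0 => [|k /andP[_ kx]].
  rewrite !dickeE eqxx; case: ifP => _; last by rewrite conjC0 mulr0.
  have sqrt_ge0 : 0 <= (sqrtC (multinom (type3 x)))^-1.
    by rewrite invr_ge0 sqrtC_ge0 multinom_ge0.
  by rewrite geC0_conj // -mulrA -expr2 exprVn sqrtCK.
by rewrite dickeE (negPf kx) mulr0 mul0r.
Qed.

(* The o with {b, c} = {a, o}, provided a \in [:: b; c]. *)
Definition companion a b c : 'I_d := if a == b then c else b.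

Lemma mset3_companion a b c e :
  a \in [:: b; c] -> mset3 e b c = mset3 e a (companion a b c).
Proof.
rewrite !inE /companion => a_bc; apply/eqP/mset3P => j.
by case: eqVneq a_bc => [->|_ /eqP->] //=; rewrite addnAC.
Qed.

Lemma mset3_eq_in a b c a' b' c' :
  a \in [:: b; c] -> a' \in [:: b'; c'] ->
  (mset3 a' b c == mset3 a b' c') = (companion a b c == companion a' b' c').
Proof.
move=> a_bc a'_bc'; rewrite (mset3_companion a' a_bc) (mset3_companion a a'_bc').
set o := companion a b c; set o' := companion a' b' c'.
apply/mset3P/eqP => [/(_ o)|<- j]; last by rewrite (addnC (a' == j)).
by rewrite eqxx; case: (eqVneq o' o) => [->|_] //; lia.
Qed.

Lemma mset3_eq_notin a b c a' b' c' :
  a' \notin [:: b'; c'] ->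
  (mset3 a' b c == mset3 a b' c') =
  [&& a == a', a \notin [:: b; c] & mset3 a b c == mset3 a' b' c'].
Proof.
rewrite !inE negb_or => /andP[a'b' a'c'].
apply/mset3P/and3P => [E|[/eqP<- _ /mset3P E //]].
have := E a'; rewrite eqxx !(eq_sym _ a') (negPf a'b') (negPf a'c') addn0.
case: (eqVneq a' a) => [eq_a'a|_]; last by lia.
subst a' => count_a; split => //; last exact/mset3P.
by case: (a == b) count_a; case: (a == c).
Qed.

Definition pt_key x : ('I_d * 'I_d) + ('I_d * dicke_idx d) :=
  let: (a, b, c) := x in
  if a \in [:: b; c] then inl (companion a b c, a) else inr (a, mset3 a b c).

Lemma ptrans_rhoDS p :
  ptrans1 (rhoDS p) =2 fpull pt_key (fblockdiag (M3 p) (fdiag (pbar_idx p \o snd))).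
Proof.
move=> [[a b] c] [[a' b'] c']; rewrite /ptrans1 rhoDSE /fpull /type3 /=.
have [a_bc|a_nbc] := boolP (a \in [:: b; c]);
  have [a'_bc'|a'_nbc'] := boolP (a' \in [:: b'; c']).
- rewrite mset3_eq_in // /M3 /= pbarE (mset3_companion a' a_bc).
  by congr (if _ then pbar_idx p _ else 0); apply/eqP/mset3P => j; lia.
- by rewrite mset3_eq_notin // a_bc andbF.
- by rewrite eq_sym mset3_eq_notin // a'_bc' andbF.
- rewrite mset3_eq_notin // a_nbc /fdiag -pair_eqE /=.
  by case: eqVneq => //= <-.
Qed.

Lemma pt_key_diag x : x.1.1 == x.1.2 -> pt_key x = inl (x.2, x.1.1).
Proof. by case: x => [[a b] c] /= /eqP <-; rewrite /pt_key inE eqxx /companion eqxx. Qed.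

Lemma fpush_pt_key_lift (v : 'I_d * 'I_d -> algC) :
  fpush pt_key (fun x => if x.1.1 == x.1.2 then v (x.2, x.1.1) else 0)
  =1 (fun z => if z is inl u then v u else 0).
Proof.
rewrite /fpush => -[[i a]|u] /=.
- rewrite (bigD1 (a, a, i)) ?pt_key_diag //= eqxx big1 ?addr0 // => x /andP[].
  case: ifP => // x_diag; rewrite (pt_key_diag x_diag) => /eqP[<- <-].
  by move: x_diag; case: x => [[a' b'] c'] /= /eqP <-; rewrite eqxx.
- by apply: big1 => x; case: ifP => // /pt_key_diag ->.
Qed.

End ThreeParties.

Theorem theorem5 (d : nat) (p : dicke_idx d -> algC) :
  (2 <= d)%N ->
  (forall k, 0 <= p k) ->
  \sum_(k | valid_idx k) p k = 1 ->
  PPT p <-> DNN (M3 p).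
Proof.
move=> _ p_ge0 _; rewrite /PPT (eq_psd (ptrans_rhoDS p)); split.
- move=> psd_pt; split=> [v|[i a] [i' a']]; last first.
    by rewrite /M3; case: ifP => // _; rewrite pbarE pbar_idx_ge0.
  have := psd_pt (fun x => if x.1.1 == x.1.2 then v (x.2, x.1.1) else 0).
  rewrite -/(qform _ _) qform_pull (eq_qform (rrefl _) (fpush_pt_key_lift v)).
  by rewrite qform_blockdiag qformv0 addr0.
- case=> psd_M3 _; apply/psd_pull/psd_blockdiag/psd_diag => // -[a k].
  exact: pbar_idx_ge0.
Qed.
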